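(* Let $\mathcal B$ be the category with one object whose only endomorphisms are the identity $i$ and an idempotent $e\ne i$ (so $e\circ e=i\circ e=e\circ i=e$). Let $\mathcal E$ have objects $\mathbb N\cup\{\infty\}$ (with the usual order and $\infty$ largest) and hom-sets $\mathcal E(X,Y)=\{i,e\}$ if $X\le Y$, $\mathcal E(X,Y)=\{e\}$ if $Y<X<\infty$, $\mathcal E(X,Y)=\varnothing$ if $X=\infty$ and $Y<\infty$, with composition as in $\mathcal B$, and let $|\text{-}|:\mathcal E\to\mathcal B$ be the identity on morphisms. Then $\mathcal E$ is a concrete category over $\mathcal B$, and the $\mathcal Q_{\mathcal B}$-category $\overline{\mathcal E}$ is tensored and order-complete but not conically cocomplete.
   Context: For a concrete category (faithful functor $|\text{-}|:\mathcal E\to\mathcal B$), $\overline{\mathcal E}(X,Y)$ is the set of maps $|X|\to|Y|$ of the form $|f'|$, $f':X\to Y$. For subsets $\mathbf f\subseteq\mathcal B(S,T)$, $\mathbf h\subseteq\mathcal B(S,U)$ put $\mathbf h\swarrow\mathbf f=\{g\mid\forall f\in\mathbf f: g\circ f\in\mathbf h\}$. $\overline{\mathcal E}$ is tensored if for every $X$ and every subset $\mathbf u\subseteq\mathcal B(|X|,T)$ there is $Y$ with $|Y|=T$ and $\overline{\mathcal E}(Y,Z)=\overline{\mathcal E}(X,Z)\swarrow\mathbf u$ for all $Z$. The fibre $\mathcal E_T$ is the class of $Y$ with $|Y|=T$ preordered by $Y\le Y'$ iff $1_T\in\overline{\mathcal E}(Y,Y')$; $\overline{\mathcal E}$ is order-complete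 if every fibre has joins of all subclasses. A presheaf of extent $T$ is a family $\varphi_X\subseteq\mathcal B(|X|,T)$ with $\varphi_X\circ\overline{\mathcal E}(X',X)\subseteq\varphi_{X'}$; a supremum is $Y$ with $|Y|=T$ and $\overline{\mathcal E}(Y,Z)=\bigcap_X\overline{\mathcal E}(X,Z)\swarrow\varphi_X$ for all $Z$; $\overline{\mathcal E}$ is conically cocomplete if for every family $(Y_i)$ in a fibre $\mathcal E_T$ the presheaf $X\mapsto\bigcup_i\overline{\mathcal E}(X,Y_i)$ has a supremum. *)

From Stdlib Require Import Arith.
Set Implicit Arguments.
Unset Strict Implicit.

Inductive Bmor : Type := Bi | Be.

(* Bcomp g f = g o f *)
Definition Bcomp (g f : Bmor) : Bmor :=
  match g, f with Bi, Bi => Bi | _, _ => Be end.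

(* ---- The category E: objects N u {oo} (None = oo). ---- *)
Definition Eobj : Type := option nat.

Definition Ele (X Y : Eobj) : Prop :=
  match X, Y with
  | _, None => True
  | None, Some _ => False
  | Some a, Some b => a <= b
  end.

(* E(X,Y) viewed as a subset of B(*,*) (|-| is the identity on morphisms,
   hence faithful). *)
Definition Ehom (X Y : Eobj) (m : Bmor) : Prop :=
  match m with
  | Bi => Ele X Y
  | Be => match X, Y with None, Some _ => False | _, _ => True end
  end.

(* ---- Generic notions for a concrete category over a one-object base
   category with endomorphism type M, composition comp, identity id;
   hom X Y is the image set  Ebar(X,Y) = { |f'| : f' : X -> Y }. ---- *)
Section Generic.
Variables (Obj M : Type) (comp : M -> M -> M) (id : M)
          (hom : Obj -> Obj -> M -> Prop).

Definition is_concrete_over_one_object : Prop :=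
  (forall a b c, comp a (comp b c) = comp (comp a b) c) /\
  (forall a, comp id a = a /\ comp a id = a) /\
  (forall X, hom X X id) /\
  (forall X Y Z f g, hom X Y f -> hom Y Z g -> hom X Z (comp g f)).

Definition Ebar (X Y : Obj) : M -> Prop := hom X Y.

Definition swarrow (h f : M -> Prop) : M -> Prop :=
  fun g => forall f0, f f0 -> h (comp g f0).

Definition set_eq (A B : M -> Prop) : Prop := forall g, A g <-> B g.

(* All objects lie over the unique object of the base, so |Y| = T is automatic. *)
Definition tensored : Prop :=
  forall (X : Obj) (u : M -> Prop), exists Y : Obj,
    forall Z, set_eq (Ebar Y Z) (swarrow (Ebar X Z) u).

Definition fibre_le (Y Y' : Obj) : Prop := Ebar Y Y' id.

Definition order_complete : Prop :=
  forall P : Obj -> Prop, exists J : Obj,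
    (forall Y, P Y -> fibre_le Y J) /\
    (forall K, (forall Y, P Y -> fibre_le Y K) -> fibre_le J K).

Definition is_presheaf (phi : Obj -> M -> Prop) : Prop :=
  forall X X' g f, phi X g -> Ebar X' X f -> phi X' (comp g f).

Definition is_supremum (phi : Obj -> M -> Prop) (Y : Obj) : Prop :=
  forall Z, set_eq (Ebar Y Z) (fun g => forall X, swarrow (Ebar X Z) (phi X) g).

Definition union_presheaf (I : Type) (Ys : I -> Obj) : Obj -> M -> Prop :=
  fun X g => exists i, Ebar X (Ys i) g.

Definition conically_cocomplete : Prop :=
  forall (I : Type) (Ys : I -> Obj), exists Y, is_supremum (union_presheaf Ys) Y.

End Generic.

(* Every nonempty hom-set of E contains e, so for a weight u not containing i
   the condition g o f in E(X,Z) for f in u only asks whether e lies in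
   E(X,Z); the tensor is then X itself, the bottom 0, or oo.  The fibre over
   the single object of B is the complete chain N u {oo}, which gives
   order-completeness.  But the family (n)_n has no supremum: a finite
   candidate fails to bound n + 1, while oo would need e in E(oo,0), because
   the weighting presheaf is empty at oo. *)
From Stdlib Require Import Lia Classical Wf_nat.

Lemma E_concrete : is_concrete_over_one_object Bcomp Bi Ehom.
Proof.
  split; [|split; [|split]].
  - intros [] [] []; reflexivity.
  - intros []; split; reflexivity.
  - intros [x|]; simpl; auto.
  - intros [x|] [y|] [z|] [] []; simpl; intros; try lia; tauto.
Qed.

Lemma Ehom_Be (X Z : Eobj) (g : Bmor) : Ehom X Z g -> Ehom X Z Be.
Proof. destruct X, Z, g; simpl; tauto. Qed.

Lemma Ehom_bottom (Z : Eobj) (g : Bmor) : Ehom (Some 0) Z g.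
Proof. destruct Z, g; simpl; auto with arith. Qed.

Definition Ecollapse (X : Eobj) : Eobj :=
  match X with None => None | Some _ => Some 0 end.

Lemma Ehom_Ecollapse (X Z : Eobj) (g : Bmor) :
  Ehom (Ecollapse X) Z g <-> Ehom X Z Be.
Proof. destruct X, Z, g; simpl; intuition lia. Qed.

Lemma swarrow_Ehom_id (X Z : Eobj) (u : Bmor -> Prop) : u Bi ->
  set_eq (Ehom X Z) (swarrow Bcomp (Ehom X Z) u).
Proof.
  intros ui g; split.
  - intros Hg [] _; [destruct g; exact Hg | destruct g; exact (Ehom_Be X Z _ Hg)].
  - intros Hg; specialize (Hg Bi ui); destruct g; exact Hg.
Qed.

Lemma swarrow_Ehom_no_id (X Z : Eobj) (u : Bmor -> Prop) (g : Bmor) : ~ u Bi ->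
  swarrow Bcomp (Ehom X Z) u g <-> (u Be -> Ehom X Z Be).
Proof.
  intros nui; split.
  - intros Hg ue; specialize (Hg Be ue); destruct g; exact Hg.
  - intros He [] uf; [contradiction | destruct g; exact (He uf)].
Qed.

Lemma E_tensored : tensored Bcomp Ehom.
Proof.
  intros X u.
  destruct (classic (u Bi)) as [ui|nui].
  - exists X; intros Z; exact (swarrow_Ehom_id X Z u ui).
  - destruct (classic (u Be)) as [ue|nue].
    + exists (Ecollapse X); intros Z g; unfold Ebar.
      rewrite Ehom_Ecollapse, swarrow_Ehom_no_id by exact nui; tauto.
    + exists (Some 0); intros Z g; unfold Ebar.
      rewrite swarrow_Ehom_no_id by exact nui.
      split; [tauto | intros _; apply Ehom_bottom].
Qed.

Lemma Ele_join (P : Eobj -> Prop) : exists J,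
  (forall Y, P Y -> Ele Y J) /\ (forall K, (forall Y, P Y -> Ele Y K) -> Ele J K).
Proof.
  set (ub n := forall Y, P Y -> Ele Y (Some n)).
  destruct (classic (exists n, ub n)) as [bounded|unbounded].
  - destruct (dec_inh_nat_subset_has_unique_least_element ub
      (fun n => classic (ub n)) bounded) as [m [[ubm least] _]].
    exists (Some m); split; [exact ubm|].
    intros [k|] ubk; simpl; auto.
  - exists None; split; [intros [] _; simpl; auto|].
    intros [k|] ubk; simpl; auto.
    apply unbounded; exists k; exact ubk.
Qed.

Lemma E_order_complete : order_complete Bi Ehom.
Proof. exact Ele_join. Qed.

Lemma union_naturals_presheaf (X : Eobj) (g : Bmor) :
  union_presheaf Ehom (fun n : nat => Some n) X g <-> X <> None.
Proof.
  unfold union_presheaf, Ebar; split.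
  - intros [n Hn] ->; destruct g; exact Hn.
  - destruct X as [x|]; [intros _ | congruence].
    exists x; destruct g; simpl; auto.
Qed.

Lemma union_naturals_no_supremum (Y : Eobj) :
  ~ is_supremum Bcomp Ehom (union_presheaf Ehom (fun n : nat => Some n)) Y.
Proof.
  intros sup; destruct Y as [n|].
  - assert (refl : Ebar Ehom (Some n) (Some n) Bi) by exact (le_n n).
    assert (in_phi : union_presheaf Ehom (fun m : nat => Some m) (Some (S n)) Bi)
      by (apply union_naturals_presheaf; discriminate).
    assert (succ_below := proj1 (sup (Some n) Bi) refl (Some (S n)) Bi in_phi).
    unfold Ebar in succ_below; simpl in succ_below; lia.
  - apply (proj2 (sup (Some 0) Be)).
    intros X f in_phi; apply union_naturals_presheaf in in_phi.
    unfold Ebar; destruct X; [destruct f; simpl; auto | congruence].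
Qed.

Theorem mainTheorem6 :
  is_concrete_over_one_object Bcomp Bi Ehom /\
  tensored Bcomp Ehom /\
  order_complete Bi Ehom /\
  ~ conically_cocomplete Bcomp Ehom.
Proof.
  split; [exact E_concrete|].
  split; [exact E_tensored|].
  split; [exact E_order_complete|].
  intros cocomplete.
  destruct (cocomplete nat (fun n => Some n)) as [Y sup].
  exact (union_naturals_no_supremum Y sup).
Qed.
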